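(* Let $\mathcal R$ be a sum-bucket game and $\mathbf p$ a routing. If a greedy move by player $i$ takes $\mathbf p$ to a routing $\mathbf p'$, then $\mathbf p'<\mathbf p$ in the order defined below (i.e. $M(\mathbf p')<M(\mathbf p)$).
   Context: A routing game $(\mathbf N,G,\mathcal P)$: players $\{1,\dots,N\}$ ($N\ge1$), a finite graph $G=(V,E)$, and for each player $i$ a nonempty finite set $\mathcal P_i$ of paths (each with at least one edge) from $u_i$ to $v_i$; $\mathcal P=\bigcup_i\mathcal P_i$, $L=\max_{p\in\mathcal P}|p|$ (number of edges). A routing is $\mathbf p=[p_1,\dots,p_N]$ with $p_i\in\mathcal P_i$; $(p_i';\mathbf p_{-i})$ replaces $p_i$ by $p_i'$. Sum-bucket game: for $k=0,1,\dots,\lceil\lg L\rceil$ the bucket $B_k$ is the set of paths in $\mathcal P$ with length in $[2^k,2^{k+1})$, and $B(q)$ is the index of the bucket of path $q$. The normalized length of a path $q$ is $\overline D_q=2^{B(q)+1}-1$. For a routing $\mathbf p$, an edge $e$ and a path $q$, $\overline C_{e,q}(\mathbf p)$ is the number of players $j$ with $e\in p_j$ and $B(p_j)=B(q)$, and $\overline C_q(\mathbf p)=\max_{e\in q}\overline C_{e,q}(\mathbf p)$. Player cost: $pc_i(\mathbf p)=\overline C_i(\mathbf p)+\overline D_i(\mathbf p)$ with $\overline C_i=\overline C_{p_i}$, $\overline D_i=\overline D_{p_i}$. A greedy move by player $i$ takes $\mathbf p$ to $(p_i';\mathbf p_{-i})$ with $p_i'\in\mathcal P_i$ and strictly smaller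 $pc_i$. Order: $r=N+2L-1$; $M(\mathbf p)=[m_1(\mathbf p),\dots,m_r(\mathbf p)]$ where $m_j(\mathbf p)$ is the number of players with cost $j$ in $\mathbf p$; $M(\mathbf p')<M(\mathbf p)$ if there is $j$ with $m_k(\mathbf p')=m_k(\mathbf p)$ for all $k>j$ and $m_j(\mathbf p')<m_j(\mathbf p)$. *)

From mathcomp Require Import all_boot.
Set Implicit Arguments. Unset Strict Implicit. Unset Printing Implicit Defensive.

(* Graph: finite vertex type V, finite edge type E (multigraph allowed),
   each edge with endpoints [ends e]; edges are traversable in either direction. *)
Section Routing.
Variables (V E : finType) (ends : E -> V * V).

Fixpoint walk (u w : V) (p : seq E) : bool :=
  match p with
  | [::] => u == w
  | e :: p' => ((ends e).1 == u) && walk (ends e).2 w p'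
            || ((ends e).2 == u) && walk (ends e).1 w p'
  end.

Definition is_path (u w : V) (p : seq E) : bool :=
  [&& walk u w p, uniq p & 0 < size p].

Variable N : nat.
Variable Pset : 'I_N -> seq (seq E).

Definition Lmax : nat := \max_(j < N) \max_(q <- Pset j) size q.

Definition bucket (q : seq E) : nat := trunc_log 2 (size q).

Definition Dbar (q : seq E) : nat := 2 ^ (bucket q).+1 - 1.

Definition routing := 'I_N -> seq E.

Definition Cbar_eq (p : routing) (e : E) (q : seq E) : nat :=
  #|[set j : 'I_N | (e \in p j) && (bucket (p j) == bucket q)]|.

Definition Cbar (p : routing) (q : seq E) : nat := \max_(e <- q) Cbar_eq p e q.

Definition pc (p : routing) (i : 'I_N) : nat := Cbar p (p i) + Dbar (p i).

Definition upd (p : routing) (i : 'I_N) (q : seq E) : routing :=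
  fun j => if j == i then q else p j.

Definition greedy_move (p p' : routing) (i : 'I_N) : Prop :=
  exists2 q, q \in Pset i & p' = upd p i q /\ pc p' i < pc p i.

Definition rlen : nat := N + 2 * Lmax - 1.

Definition mcount (p : routing) (j : nat) : nat := #|[set i : 'I_N | pc p i == j]|.

Definition Mlt (p' p : routing) : Prop :=
  exists j, [/\ 1 <= j <= rlen,
    (forall k, j < k <= rlen -> mcount p' k = mcount p k) &
    mcount p' j < mcount p j].

End Routing.

From mathcomp Require Import all_boot.

Set Implicit Arguments. Unset Strict Implicit. Unset Printing Implicit Defensive.

(* The argument has two independent halves.
   - Counting: if a move strictly lowers the cost of the mover [i] and every
     other player either does not get more expensive or ends below the old
     cost of [i], then at the level m = the largest old cost among players whose
     cost dropped, no count above m changes and the count at m drops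
     ([top_count_decrease]).  This is a fact about any two functions I -> nat.
   - Congestion: when [i] switches to path q, a player j only shares
     congested edges with [i] if its path lies in the bucket of q; then its
     congestion is bounded by that of [i]'s new path, and so is its normalized
     length.  Hence j's new cost is at most its old cost or at most the new cost
     of [i] ([pc_upd_other]).
   Finally every cost lies in [1, N + 2L - 1] ([pc_pos], [pc_le_rlen]), so the
   level m is a legal index of the order on M. *)

Section TopCount.
Variables (I : finType) (c c' : I -> nat).

Definition level_count (f : I -> nat) (k : nat) : nat := #|[set j | f j == k]|.

Lemma top_count_decrease (i : I) :
  c' i < c i -> (forall j, c' j <= c j \/ c' j < c i) ->
  exists2 j0, c' j0 < c j0 &
    (forall k, c j0 < k -> level_count c' k = level_count c k) /\
    level_count c' (c j0) < level_count c (c j0).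
Proof.
move=> improve_i others.
pose improving := [pred j | c' j < c j].
have nonempty : 0 < #|improving| by apply/card_gt0P; exists i.
have [j0 improve_j0 top] := eq_bigmax_cond c nonempty.
have lt_j0 : c' j0 < c j0 := improve_j0.
set m := \max_(j | improving j) c j in top.
have below_m j : c' j < c j -> c j <= m by move=> h; exact: leq_bigmax_cond.
have changed j : c' j != c j -> c' j < m /\ c j <= m.
  move=> ne; have [le_j | lt_i] := others j.
    have lt_j : c' j < c j by rewrite ltn_neqAle ne.
    by split; [exact: leq_trans lt_j (below_m j lt_j) | exact: below_m].
  have lt_m : c' j < m := leq_trans lt_i (below_m i improve_i).
  split=> //; case: (leqP (c j) (c' j)) => [h|]; last exact: below_m.
  exact: leq_trans h (ltnW lt_m).
exists j0 => //; rewrite -top; split.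
  move=> k lt_mk; apply: eq_card => j; rewrite !inE.
  have [-> // | ne] := eqVneq (c' j) (c j).
  have [lt' le] := changed j ne.
  by rewrite !ltn_eqF ?(ltn_trans lt' lt_mk) ?(leq_ltn_trans le lt_mk).
apply: proper_card; apply/properP; split.
  apply/subsetP => j; rewrite !inE => /eqP eq_m.
  have [<- | ne] := eqVneq (c' j) (c j); first by rewrite eq_m.
  by have [] := changed j ne; rewrite eq_m ltnn.
by exists j0; rewrite !inE top ?eqxx ?ltn_eqF.
Qed.

End TopCount.

Section Congestion.
Variables (E : finType) (N : nat).
Implicit Types (p : routing E N) (q r : seq E) (e : E) (i : 'I_N).

Lemma Cbar_eq_bucket p e q r :
  bucket q = bucket r -> Cbar_eq p e q = Cbar_eq p e r.
Proof. by move=> eq_b; rewrite /Cbar_eq eq_b. Qed.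

Lemma Cbar_eq_upd_le p i q e r :
  ~~ ((e \in q) && (bucket q == bucket r)) ->
  Cbar_eq (upd p i q) e r <= Cbar_eq p e r.
Proof.
move=> not_new; apply: subset_leq_card; apply/subsetP => x.
rewrite !inE /upd; case: (x == i) => //.
by move=> /andP[e_q /eqP b_q]; move: not_new; rewrite e_q b_q eqxx.
Qed.

Lemma Cbar_upd_other_bucket p i q r :
  bucket q != bucket r -> Cbar (upd p i q) r <= Cbar p r.
Proof.
move=> ne_b; apply/bigmax_leqP_seq => e e_r _.
have no_new : ~~ ((e \in q) && (bucket q == bucket r)) by rewrite (negbTE ne_b) andbF.
exact: leq_trans (Cbar_eq_upd_le p i no_new) (leq_bigmax_seq e e_r isT).
Qed.

Lemma Cbar_upd_same_bucket p i q r :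
  bucket q = bucket r ->
  Cbar (upd p i q) r <= maxn (Cbar p r) (Cbar (upd p i q) q).
Proof.
move=> eq_b; apply/bigmax_leqP_seq => e e_r _; rewrite leq_max.
have [e_q | e_nq] := boolP (e \in q).
  by rewrite -(Cbar_eq_bucket _ _ eq_b) (leq_bigmax_seq e e_q) ?orbT.
by rewrite (leq_trans (Cbar_eq_upd_le _ _ _)) ?(leq_bigmax_seq e e_r) ?(negbTE e_nq).
Qed.

Lemma pc_upd_other p i q j :
  pc (upd p i q) j <= pc p j \/ pc (upd p i q) j <= pc (upd p i q) i.
Proof.
have [-> | ne_ji] := eqVneq j i; first by right.
have new_j : upd p i q j = p j by rewrite /upd (negbTE ne_ji).
have new_i : upd p i q i = q by rewrite /upd eqxx.
rewrite /pc new_j new_i.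
have [eq_b | ne_b] := eqVneq (bucket q) (bucket (p j)).
  have := Cbar_upd_same_bucket p i eq_b; rewrite leq_max => /orP[old | new].
    by left; rewrite leq_add2r.
  by right; rewrite /Dbar eq_b leq_add2r.
by left; rewrite leq_add2r Cbar_upd_other_bucket.
Qed.

Lemma Cbar_le_N p q : Cbar p q <= N.
Proof.
apply/bigmax_leqP_seq => e _ _.
by apply: leq_trans (max_card _) _; rewrite card_ord.
Qed.

End Congestion.

Lemma Dbar_pos (E : finType) (q : seq E) : 0 < Dbar q.
Proof. by rewrite /Dbar subn_gt0 (ltn_exp2l 0) ?ltn0Sn. Qed.

(* A nonempty path of length at most L has normalized length at most 2L - 1,
   since 2 ^ B(q) <= |q|. *)
Lemma Dbar_le (E : finType) (q : seq E) (L : nat) :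
  0 < size q -> size q <= L -> Dbar q <= 2 * L - 1.
Proof.
move=> q_gt0 q_le; rewrite /Dbar /bucket leq_sub2r // expnS leq_mul2l /=.
exact: leq_trans (trunc_logP (isT : 1 < 2) q_gt0) q_le.
Qed.

Lemma pc_pos (E : finType) (N : nat) (p : routing E N) (j : 'I_N) : 0 < pc p j.
Proof. by rewrite /pc addn_gt0 Dbar_pos orbT. Qed.

Lemma size_le_Lmax (E : finType) (N : nat) (Pset : 'I_N -> seq (seq E))
    (j : 'I_N) (q : seq E) :
  q \in Pset j -> size q <= Lmax Pset.
Proof.
move=> q_j; rewrite /Lmax (bigD1 j) //= leq_max.
by rewrite (leq_bigmax_seq q q_j).
Qed.

Lemma pc_le_rlen (E : finType) (N : nat) (Pset : 'I_N -> seq (seq E))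
    (p : routing E N) (j : 'I_N) :
  p j \in Pset j -> 0 < size (p j) -> pc p j <= rlen Pset.
Proof.
move=> p_j p_gt0; have le_L := size_le_Lmax p_j.
rewrite /pc /rlen -addnBA ?muln_gt0 ?(leq_trans p_gt0 le_L) //.
exact: leq_add (Cbar_le_N _ _) (Dbar_le p_gt0 le_L).
Qed.

Theorem mainTheorem9 (V E : finType) (ends : E -> V * V) (N : nat) (HN : 0 < N)
  (u w : 'I_N -> V) (Pset : 'I_N -> seq (seq E))
  (HPne : forall i, Pset i != [::])
  (HPpath : forall i q, q \in Pset i -> is_path ends (u i) (w i) q)
  (p : routing E N) (Hp : forall i, p i \in Pset i)
  (p' : routing E N) (i : 'I_N) (Hmove : greedy_move Pset p p' i) :
  Mlt Pset p' p.
Proof.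
case: Hmove => q _ [-> improve_i].
have others j : pc (upd p i q) j <= pc p j \/ pc (upd p i q) j < pc p i.
  have [le | le] := pc_upd_other p i q j; first by left.
  by right; exact: leq_ltn_trans le improve_i.
have [j0 _ [same_above drop_at]] := top_count_decrease improve_i others.
have nonempty : 0 < size (p j0) by have /and3P[] := HPpath _ _ (Hp j0).
exists (pc p j0); split=> //.
  by rewrite pc_pos pc_le_rlen.
by move=> k /andP[lt_k _]; exact: same_above.
Qed.
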